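(* Let $p:\mathbb{R}^+\times\mathbb{R}^+\to[0,\infty)$ be bounded and continuous in $N$, and let $(n^0_j)_{j\ge1}$ be a nonnegative sequence with $\|n^0\|_1<\infty$ and $\|n^0\|_\infty<\infty$. Let $(n^m_j)$, $(N^m)$ be generated by the ITM upwind scheme under the CFL condition. Then for every $m\in\mathbb{N}$, $\|n^m\|_1=\sum_{j\ge1}\Delta s\,n^m_j=\|n^0\|_1$.
   Context: ITM upwind scheme: fix $\Delta s,\Delta t>0$; set $s_j=(j-\tfrac12)\Delta s$, $I_j=[(j-1)\Delta s,j\Delta s)$ for $j\in\{1,2,\dots\}$, and $t^m=m\Delta t$. For a sequence $u=(u_j)_{j\ge1}$, $\|u\|_1=\sum_{j\ge1}\Delta s|u_j|$ and $\|u\|_\infty=\sup_j|u_j|$. Given nonnegative initial values $(n^0_j)_{j\ge1}$, for $m=0,1,2,\dots$: $N^m\ge0$ is a solution of $N^m=\sum_{j\ge1}\Delta s\,p(s_j,N^m)\,n^m_j$ (a nonnegative solution always exists), one sets $n^m_0:=N^m$, and $n^{m+1}_j=n^m_j-\frac{\Delta t}{\Delta s}(n^m_j-n^m_{j-1})-\Delta t\,p(s_j,N^m)\,n^m_j$ for $j\ge1$. CFL condition: $\Delta t\le\left(\frac{1}{\Delta s}+\|p\|_\infty\right)^{-1}$, where $\|p\|_\infty=\sup|p|$. *)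

From Stdlib Require Import Reals.
From Coquelicot Require Import Coquelicot.
Open Scope R_scope.

Definition sgrid (ds : R) (j : nat) : R := (INR j - / 2) * ds.

(* ||u||_1 = sum_{j>=1} ds |u_j| (the value of the series; the statement
   always additionally asserts convergence explicitly). *)
Definition norm1 (ds : R) (u : nat -> R) : R :=
  Series (fun j => ds * Rabs (u (S j))).

(* The range of |p| on the domain s > 0, N >= 0; ||p||_inf is its sup. *)
Definition abs_p_range (p : R -> R -> R) (y : R) : Prop :=
  exists s N, 0 < s /\ 0 <= N /\ y = Rabs (p s N).

(* The proof is an induction on the time step m with the invariant
   "n^m_j >= 0 for j >= 1 and sum_{j>=1} ds n^m_j = ||n^0||_1".
   - Positivity: under the CFL condition the update writes n^{m+1}_j as
     (1 - dt/ds - dt p) n^m_j + (dt/ds) n^m_{j-1}, a combination with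
     nonnegative coefficients of nonnegative values (n^m_0 = N^m >= 0).
   - Mass: summing the update over j >= 1, the transport term telescopes
     to the boundary influx dt N^m, which is exactly cancelled by the total
     loss dt sum_j ds p(s_j, N^m) n^m_j = dt N^m (the defining equation of N^m).
   Positivity then identifies the l^1 norm with the plain sum. *)
From Stdlib Require Import Reals Lra Lia.
From Coquelicot Require Import Coquelicot.
Open Scope R_scope.

Lemma upwind_update_nonneg (c l u w : R) :
  0 <= c -> 0 <= l -> c + l <= 1 -> 0 <= u -> 0 <= w ->
  0 <= u - c * (u - w) - l * u.
Proof.
  intros Hc Hl Hcl Hu Hw.
  replace (u - c * (u - w) - l * u) with ((1 - c - l) * u + c * w) by ring.
  apply Rplus_le_le_0_compat; apply Rmult_le_pos; lra.
Qed.

Lemma upwind_step_mass (ds dt B M : R) (q u v : nat -> R) :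
  ds <> 0 ->
  is_series (fun j => ds * u (S j)) M ->
  is_series (fun j => ds * q (S j) * u (S j)) B ->
  u 0%nat = B ->
  (forall j, v (S j) = u (S j) - dt / ds * (u (S j) - u j)
                       - dt * q (S j) * u (S j)) ->
  is_series (fun j => ds * v (S j)) M.
Proof.
  intros Hds Hmass Hloss Hbd Hv.
  assert (Hshift : is_series (fun j => ds * u j) (ds * B + M)).
  { apply is_series_decr_1. rewrite Hbd.
    match goal with |- is_series _ ?l => replace l with M; [exact Hmass |] end.
    unfold plus, opp; simpl. ring. }
  pose proof (is_series_minus _ _ _ _
    (is_series_plus _ _ _ _ (is_series_scal (1 - dt / ds) _ _ Hmass)
                            (is_series_scal (dt / ds) _ _ Hshift))
    (is_series_scal dt _ _ Hloss)) as Hcomb.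
  replace M with (plus (plus (scal (1 - dt / ds) M) (scal (dt / ds) (ds * B + M)))
                       (opp (scal dt B)))
    by (unfold plus, opp, scal; simpl; unfold mult; simpl; field; exact Hds).
  apply is_series_ext with (2 := Hcomb). intros j.
  unfold plus, opp, scal; simpl; unfold mult; simpl.
  rewrite Hv. field. exact Hds.
Qed.

Lemma abs_p_lub_nonneg (p : R -> R -> R) (pinf : R) :
  is_lub (abs_p_range p) pinf -> 0 <= pinf.
Proof.
  intros [Hub _]. apply Rle_trans with (Rabs (p 1 0)); [apply Rabs_pos |].
  apply Hub. exists 1, 0. repeat split; lra.
Qed.

Lemma sgrid_pos (ds : R) (j : nat) : 0 < ds -> (1 <= j)%nat -> 0 < sgrid ds j.
Proof.
  intros Hds Hj. apply le_INR in Hj. simpl in Hj.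
  unfold sgrid. apply Rmult_lt_0_compat; lra.
Qed.

Lemma p_le_lub (p : R -> R -> R) (pinf s x : R) :
  is_lub (abs_p_range p) pinf -> 0 < s -> 0 <= x -> 0 <= p s x -> p s x <= pinf.
Proof.
  intros [Hub _] Hs Hx Hpos. rewrite <- (Rabs_pos_eq (p s x) Hpos).
  apply Hub. exists s, x. repeat split; assumption.
Qed.

Lemma cfl_coefficients (ds dt pinf q : R) :
  0 < ds -> 0 < dt -> 0 <= pinf -> dt <= / (/ ds + pinf) -> 0 <= q <= pinf ->
  0 <= dt / ds /\ 0 <= dt * q /\ dt / ds + dt * q <= 1.
Proof.
  intros Hds Hdt Hpinf HCFL Hq.
  assert (Hinv : 0 < / ds) by (apply Rinv_0_lt_compat; exact Hds).
  assert (Hcfl : dt * (/ ds + pinf) <= 1).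
  { apply Rmult_le_compat_r with (r := / ds + pinf) in HCFL; [| lra].
    rewrite Rinv_l in HCFL; lra. }
  assert (dt * q <= dt * pinf) by (apply Rmult_le_compat_l; lra).
  unfold Rdiv. repeat split; nra.
Qed.

Theorem mainTheorem3
  (ds dt : R) (p : R -> R -> R) (n : nat -> nat -> R) (N : nat -> R) (pinf : R)
  (Hds : 0 < ds) (Hdt : 0 < dt)
  (* p : R^+ x R^+ -> [0, oo), bounded, continuous in N *)
  (Hp_nonneg : forall s x, 0 < s -> 0 <= x -> 0 <= p s x)
  (Hp_bdd : exists M, forall s x, 0 < s -> 0 <= x -> p s x <= M)
  (Hp_cont : forall s x, 0 < s -> 0 <= x ->
     filterlim (p s) (within (fun y => 0 <= y) (locally x)) (locally (p s x)))
  (* pinf = ||p||_inf = sup |p| *)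
  (Hpinf : is_lub (abs_p_range p) pinf)
  (* initial data: nonnegative, finite l^1 and l^oo norms *)
  (Hn0_nonneg : forall j, (1 <= j)%nat -> 0 <= n 0%nat j)
  (Hn0_l1 : ex_series (fun j => ds * Rabs (n 0%nat (S j))))
  (Hn0_linf : exists B, forall j, (1 <= j)%nat -> Rabs (n 0%nat j) <= B)
  (* N^m >= 0 solves N^m = sum_{j>=1} ds p(s_j, N^m) n^m_j *)
  (HN_nonneg : forall m, 0 <= N m)
  (HN_eq : forall m,
     is_series (fun j => ds * p (sgrid ds (S j)) (N m) * n m (S j)) (N m))
  (* boundary value n^m_0 := N^m *)
  (Hbd : forall m, n m 0%nat = N m)
  (* upwind update *)
  (Hstep : forall m j, (1 <= j)%nat ->
     n (S m) j = n m j - dt / ds * (n m j - n m (j - 1)%nat)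
                 - dt * p (sgrid ds j) (N m) * n m j)
  (* CFL condition *)
  (HCFL : dt <= / (/ ds + pinf)) :
  forall m : nat,
    is_series (fun j => ds * Rabs (n m (S j))) (norm1 ds (n 0%nat)) /\
    is_series (fun j => ds * n m (S j)) (norm1 ds (n 0%nat)).
Proof.
  pose proof (abs_p_lub_nonneg p pinf Hpinf) as Hpinf0.
  assert (Habs : forall u : nat -> R, (forall j, (1 <= j)%nat -> 0 <= u j) ->
            forall j, ds * Rabs (u (S j)) = ds * u (S j)).
  { intros u Hu j. rewrite Rabs_pos_eq; [reflexivity | apply Hu; lia]. }
  assert (Hmass0 : is_series (fun j => ds * n 0%nat (S j)) (norm1 ds (n 0%nat))).
  { apply is_series_ext with (1 := Habs _ Hn0_nonneg), Series_correct, Hn0_l1. }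
  assert (Hinv : forall m, (forall j, (1 <= j)%nat -> 0 <= n m j) /\
            is_series (fun j => ds * n m (S j)) (norm1 ds (n 0%nat))).
  { induction m as [| m [Hpos Hmass]]; [split; assumption |]. split.
    - intros j Hj. rewrite Hstep by exact Hj.
      pose proof (sgrid_pos ds j Hds Hj) as Hs.
      pose proof (Hp_nonneg _ _ Hs (HN_nonneg m)) as Hp0.
      destruct (cfl_coefficients ds dt pinf (p (sgrid ds j) (N m)) Hds Hdt Hpinf0
                  HCFL (conj Hp0 (p_le_lub p pinf _ _ Hpinf Hs (HN_nonneg m) Hp0)))
        as [Hc [Hl Hcl]].
      apply upwind_update_nonneg; try assumption; [apply Hpos, Hj |].
      destruct (j - 1)%nat as [| i] eqn:Hi; [rewrite Hbd; apply HN_nonneg |].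
      apply Hpos; lia.
    - apply (upwind_step_mass ds dt (N m) _ (fun j => p (sgrid ds j) (N m)) (n m));
        [lra | exact Hmass | exact (HN_eq m) | apply Hbd |].
      intros j. rewrite Hstep by lia. replace (S j - 1)%nat with j by lia.
      reflexivity. }
  intros m. destruct (Hinv m) as [Hpos Hmass]. split; [| exact Hmass].
  apply is_series_ext with (2 := Hmass). intros j. symmetry. apply Habs, Hpos.
Qed.
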